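(* Let $\mathcal{X}$ be a connected $n$-premaniplex with base flag $x_0$, let $(\mathcal{Y},\eta)$ be an $(n,m)$-voltage operator with $\mathcal{Y}$ connected and base flag $y_0$, let $N=\operatorname{Stab}_{\mathcal{C}^n}(x_0)$, $L=\operatorname{Stab}_{\mathcal{C}^m}(y_0)$, and $\zeta:L\to\mathcal{C}^n$, $\zeta(\omega)=\eta(W_\omega(y_0))$. If $\mathcal{X}\rtimes_\eta\mathcal{Y}$ is connected and every automorphism of $\mathcal{X}\rtimes_\eta\mathcal{Y}$ is induced by an automorphism of $\mathcal{X}$, then $\operatorname{N}_{\mathcal{C}^m}(\zeta^{-1}(N))\subseteq L$. Conversely, if $(\mathcal{Y},\eta)$ preserves connectivity and $\operatorname{N}_{\mathcal{C}^m}(\zeta^{-1}(N))\subseteq L$, then every automorphism of $\mathcal{X}\rtimes_\eta\mathcal{Y}$ is induced by an automorphism of $\mathcal{X}$.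
   Context: An $n$-premaniplex is an edge-coloured graph (semi-edges and parallel edges allowed) with colours $\{0,\dots,n-1\}$ such that every vertex (flag) is the start of exactly one dart of each colour, and for $|i-j|\ge2$ alternating $i,j$-paths of length 4 are closed; $x^i$ is the $i$-adjacent flag of $x$. $\mathcal{C}^n=\langle r_0,\dots,r_{n-1}\mid r_i^2,\ (r_ir_j)^2\ (|i-j|\ge2)\rangle$ acts on the left on flags by $r_ix=x^i$; automorphisms act on the right. For a flag $y$ of an $m$-premaniplex $\mathcal{Y}$ and $\omega\in\mathcal{C}^m$, $W_\omega(y)$ is the homotopy class of paths from $y$ whose colour sequence $i_1,\dots,i_k$ satisfies $r_{i_k}\cdots r_{i_1}=\omega$; these form the fundamental groupoid $\Pi(\mathcal{Y})$. A voltage assignment $\eta:\Pi(\mathcal{Y})\to\mathcal{C}^n$ satisfies $\eta(W_1W_2)=\eta(W_2)\eta(W_1)$; $(\mathcal{Y},\eta)$ is an $(n,m)$-voltage operator. $\mathcal{X}\rtimes_\eta\mathcal{Y}$ has flags $\mathcal{X}\times\mathcal{Y}$ and $(x,y)^i=(\eta(W_{r_i}(y))x,r_iy)$, $i\in\{0,\dots,m-1\}$. An automorphism $\gamma$ of $\mathcal{X}\rtimes_\eta\mathcal{Y}$ is induced by an automorphism of $\mathcal{X}$ if there is $\alpha\in\operatorname{Aut}(\mathcal{X})$ with $(x,y)\gamma=(x\alpha,y)$ for all $(x,y)$. The operator preserves connectivity if $\mathcal{X}\rtimes_\eta\mathcal{Y}$ is connected whenever $\mathcal{X}$ is. Standing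 convention: $\mathcal{Y}$ has a spanning tree all of whose darts have trivial voltage. *)

From mathcomp Require Import all_boot.
Set Implicit Arguments. Unset Strict Implicit. Unset Printing Implicit Defensive.

(* The Coxeter group C^n = < r_0..r_{n-1} | r_i^2, (r_i r_j)^2 (|i-j|>=2) >,
   represented by words: the word [:: a1; ...; ak] stands for the product
   r_{a1} r_{a2} ... r_{ak}; equality in C^n is the congruence [coxeq n]
   generated by the defining relations.                                  *)

Definition far (i j : nat) : bool := (i.+2 <= j) || (j.+2 <= i).

Inductive coxeq (n : nat) : seq 'I_n -> seq 'I_n -> Prop :=
| cx_refl w : coxeq w w
| cx_sym w w' : coxeq w w' -> coxeq w' w
| cx_trans w1 w2 w3 : coxeq w1 w2 -> coxeq w2 w3 -> coxeq w1 w3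
| cx_inv (s t : seq 'I_n) (i : 'I_n) : coxeq (s ++ i :: i :: t) (s ++ t)
| cx_comm (s t : seq 'I_n) (i j : 'I_n) :
    far i j -> coxeq (s ++ i :: j :: t) (s ++ j :: i :: t).

(* Inverse of a word (all generators are involutions). *)
Definition winv (n : nat) (w : seq 'I_n) : seq 'I_n := rev w.

Definition is_premaniplex (n : nat) (F : Type) (adj : 'I_n -> F -> F) : Prop :=
  (forall (i : 'I_n) (x : F), adj i (adj i x) = x) /\
  (forall (i j : 'I_n) (x : F), far i j -> adj i (adj j (adj i (adj j x))) = x).

Definition act (n : nat) (F : Type) (adj : 'I_n -> F -> F) (w : seq 'I_n) (x : F) : F :=
  foldr (fun i z => adj i z) x w.

Definition connected (n : nat) (F : Type) (adj : 'I_n -> F -> F) : Prop :=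
  forall x y : F, exists w : seq 'I_n, act adj w x = y.

Definition is_aut (n : nat) (F : Type) (adj : 'I_n -> F -> F) (g : F -> F) : Prop :=
  bijective g /\ forall (i : 'I_n) (x : F), g (adj i x) = adj i (g x).

(* Since W_omega(y) is determined by (y, omega), the
   fundamental groupoid Pi(Y) is encoded by pairs (y, w) (the class of
   paths from y with colour product w, with w applied first its last
   letter).  A voltage assignment eta : Pi(Y) -> C^n is a function
   eta y w (a word of C^n), well defined on C^m-classes, satisfying
   eta(W1 W2) = eta(W2) eta(W1), i.e.
   eta y (w2 ++ w1) = eta (act w1 y) w2 * eta y w1.                     *)

Definition voltage_assignment (n m : nat) (Y : Type) (adjY : 'I_m -> Y -> Y)
    (eta : Y -> seq 'I_m -> seq 'I_n) : Prop :=
  (forall (y : Y) (w w' : seq 'I_m), coxeq w w' -> coxeq (eta y w) (eta y w')) /\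
  (forall (y : Y) (w1 w2 : seq 'I_m),
      coxeq (eta y (w2 ++ w1)) (eta (act adjY w1 y) w2 ++ eta y w1)).

(* Walks in a set of darts T (dart (y,i) goes from y to adj i y); the walk
   from y with colour sequence s (first step = head of s). *)
Fixpoint walk_in (m : nat) (Y : Type) (adjY : 'I_m -> Y -> Y)
    (T : Y -> 'I_m -> Prop) (y : Y) (s : seq 'I_m) : Prop :=
  match s with
  | [::] => True
  | i :: s' => T y i /\ walk_in adjY T (adjY i y) s'
  end.

Definition walk_end (m : nat) (Y : Type) (adjY : 'I_m -> Y -> Y) (y : Y)
    (s : seq 'I_m) : Y := foldl (fun z i => adjY i z) y s.

(* reduced = no immediate backtracking (never the same colour twice in a row) *)
Definition reduced (m : nat) (s : seq 'I_m) : bool := sorted (fun a b => a != b) s.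

Definition spanning_tree (m : nat) (Y : Type) (adjY : 'I_m -> Y -> Y)
    (T : Y -> 'I_m -> Prop) : Prop :=
  (forall (y : Y) (i : 'I_m), T y i -> T (adjY i y) i) /\
  (forall y y' : Y, exists! s : seq 'I_m,
      walk_in adjY T y s /\ reduced s /\ walk_end adjY y s = y').

Definition trivial_spanning_tree (n m : nat) (Y : Type) (adjY : 'I_m -> Y -> Y)
    (eta : Y -> seq 'I_m -> seq 'I_n) : Prop :=
  exists T : Y -> 'I_m -> Prop, spanning_tree adjY T /\
    forall (y : Y) (i : 'I_m), T y i -> coxeq (eta y [:: i]) [::].

Definition mix_adj (n m : nat) (X Y : Type) (adjX : 'I_n -> X -> X)
    (adjY : 'I_m -> Y -> Y) (eta : Y -> seq 'I_m -> seq 'I_n)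
    (i : 'I_m) (p : X * Y) : X * Y :=
  (act adjX (eta p.2 [:: i]) p.1, adjY i p.2).

Definition induced_by_aut (n : nat) (X Y : Type) (adjX : 'I_n -> X -> X)
    (gamma : X * Y -> X * Y) : Prop :=
  exists alpha : X -> X, is_aut adjX alpha /\
    forall (x : X) (y : Y), gamma (x, y) = (alpha x, y).

Definition all_auts_induced (n m : nat) (X Y : Type) (adjX : 'I_n -> X -> X)
    (adjY : 'I_m -> Y -> Y) (eta : Y -> seq 'I_m -> seq 'I_n) : Prop :=
  forall gamma : X * Y -> X * Y,
    is_aut (mix_adj adjX adjY eta) gamma -> induced_by_aut adjX gamma.

Definition preserves_connectivity (n m : nat) (Y : Type) (adjY : 'I_m -> Y -> Y)
    (eta : Y -> seq 'I_m -> seq 'I_n) : Prop :=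
  forall (X' : Type) (adjX' : 'I_n -> X' -> X'),
    is_premaniplex adjX' -> connected adjX' -> connected (mix_adj adjX' adjY eta).

Definition in_stab (n : nat) (F : Type) (adj : 'I_n -> F -> F) (x0 : F)
    (w : seq 'I_n) : Prop := act adj w x0 = x0.

Definition in_zeta_preim (n m : nat) (X Y : Type) (adjX : 'I_n -> X -> X) (x0 : X)
    (adjY : 'I_m -> Y -> Y) (y0 : Y) (eta : Y -> seq 'I_m -> seq 'I_n)
    (w : seq 'I_m) : Prop :=
  in_stab adjY y0 w /\ in_stab adjX x0 (eta y0 w).

Definition in_normalizer (m : nat) (K : seq 'I_m -> Prop) (g : seq 'I_m) : Prop :=
  forall k : seq 'I_m, K k <-> K (g ++ k ++ winv g).

From mathcomp Require Import all_boot.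
From Stdlib Require Import ProofIrrelevance FunctionalExtensionality.
From Stdlib Require Import PropExtensionality IndefiniteDescription.
Set Implicit Arguments. Unset Strict Implicit. Unset Printing Implicit Defensive.

(* The mix is a C^m-set whose stabiliser at b = (x0, y0) is zeta^-1(N).  In a
   connected C^m-set, a.b |-> (a g^-1).b is a well-defined automorphism
   exactly when g normalises Stab(b), and an automorphism sending b to g0.b
   makes g0^-1 normalise Stab(b).
   If every automorphism is induced from X, the one attached to a normalising g
   fixes Y-coordinates, so g^-1, hence g, fixes y0.  Conversely, if the
   normaliser lies in L, an automorphism fixes the Y-coordinate of b, hence of
   every flag.  Preserving connectivity, applied to the universal premaniplex
   C^n, shows that zeta maps L onto C^n; so the restriction of the automorphism
   to the fibre over y0 commutes with all of C^n, is an automorphism of X, and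
   induces the given one. *)

Section CoxeterWords.
Variable n : nat.
Implicit Types a b s t u k : seq 'I_n.

Lemma coxeq_cat s t a b : coxeq a b -> coxeq (s ++ a ++ t) (s ++ b ++ t).
Proof.
elim=> {a b} [w | w w' _ IH | w1 w2 w3 _ IH1 _ IH2 | s0 t0 i | s0 t0 i j far_ij].
- exact: cx_refl.
- exact: cx_sym.
- exact: cx_trans IH1 IH2.
- by have := cx_inv (s ++ s0) (t0 ++ t) i; rewrite -!catA.
- by have := cx_comm (s ++ s0) (t0 ++ t) far_ij; rewrite -!catA.
Qed.

Lemma coxeq_catl s a b : coxeq a b -> coxeq (s ++ a) (s ++ b).
Proof. by move/(coxeq_cat s [::]); rewrite !cats0. Qed.

Lemma coxeq_revK a : coxeq (rev a ++ a) [::].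
Proof.
elim: a => [|i a IH]; first exact: cx_refl.
by rewrite rev_cons cat_rcons; apply: cx_trans (cx_inv _ _ _) IH.
Qed.

Lemma coxeq_catrev a : coxeq (a ++ rev a) [::].
Proof. by have := coxeq_revK (rev a); rewrite revK. Qed.

Lemma coxeq_consC (i : 'I_n) s u : coxeq (i :: s) u <-> coxeq s (i :: u).
Proof.
split=> H.
  exact: cx_trans (cx_sym (cx_inv [::] s i)) (coxeq_catl [:: i] H).
exact: cx_trans (coxeq_catl [:: i] H) (cx_inv [::] u i).
Qed.

Lemma coxeq_conjK g k : coxeq (g ++ (rev g ++ k ++ g) ++ rev g) k.
Proof.
rewrite -!catA catA.
apply: cx_trans (coxeq_cat [::] _ (coxeq_catrev g)) _ => /=.
by have := coxeq_cat k [::] (coxeq_catrev g); rewrite !cats0.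
Qed.

End CoxeterWords.

Definition cox_compatible (n : nat) (F : Type) (adj : 'I_n -> F -> F) : Prop :=
  forall a b x, coxeq a b -> act adj a x = act adj b x.

Lemma act_cat (n : nat) (F : Type) (adj : 'I_n -> F -> F) s t x :
  act adj (s ++ t) x = act adj s (act adj t x).
Proof. exact: foldr_cat. Qed.

Lemma premaniplex_cox_compatible (n : nat) (F : Type) (adj : 'I_n -> F -> F) :
  is_premaniplex adj -> cox_compatible adj.
Proof.
move=> [adjK adj_far] a b x ab; elim: ab x => {a b}.
- by [].
- by move=> w w' _ IH x; rewrite IH.
- by move=> w1 w2 w3 _ IH1 _ IH2 x; rewrite IH1 IH2.
- by move=> s t i x; rewrite !act_cat /= adjK.
- move=> s t i j far_ij x; rewrite !act_cat /=; congr (act adj s _).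
  by have := adj_far i j (adj j (adj i (act adj t x))) far_ij; rewrite !adjK.
Qed.

Lemma aut_act (n : nat) (F : Type) (adj : 'I_n -> F -> F) (gam : F -> F) a p :
  is_aut adj gam -> gam (act adj a p) = act adj a (gam p).
Proof. by case=> _ gam_adj; elim: a => //= i a <-. Qed.

Lemma in_stab_aut (n : nat) (F : Type) (adj : 'I_n -> F -> F) (gam : F -> F) p k :
  is_aut adj gam -> in_stab adj (gam p) k <-> in_stab adj p k.
Proof.
move=> gam_aut; rewrite /in_stab -aut_act //.
by case: gam_aut => /bij_inj gam_inj _; split=> [/gam_inj | ->].
Qed.

Lemma eq_in_normalizer (m : nat) (K K' : seq 'I_m -> Prop) g :
  (forall k, K k <-> K' k) -> in_normalizer K g -> in_normalizer K' g.
Proof. by move=> KK' Kg k; rewrite -!KK'. Qed.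

Section CompatibleAction.
Variables (n : nat) (F : Type) (adj : 'I_n -> F -> F).
Hypothesis adj_compat : cox_compatible adj.

Lemma act_revK w x : act adj (rev w) (act adj w x) = x.
Proof. by rewrite -act_cat (adj_compat _ (coxeq_revK w)). Qed.

Lemma act_Krev w x : act adj w (act adj (rev w) x) = x.
Proof. by have := act_revK (rev w) x; rewrite revK. Qed.

Lemma in_stab_rev p g : in_stab adj p (rev g) -> in_stab adj p g.
Proof. by rewrite /in_stab => E; rewrite -{1}E act_Krev. Qed.

Lemma in_stab_coxeq p a b : coxeq a b -> in_stab adj p a -> in_stab adj p b.
Proof. by rewrite /in_stab => /adj_compat->. Qed.

Lemma act_inj_stab p a a' :
  act adj a p = act adj a' p <-> in_stab adj p (rev a' ++ a).
Proof.
rewrite /in_stab act_cat; split=> [-> | E]; first exact: act_revK.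
by rewrite -[LHS](act_Krev a') E.
Qed.

Lemma in_stab_act p h k :
  in_stab adj (act adj h p) k <-> in_stab adj p (rev h ++ k ++ h).
Proof. by rewrite /in_stab -act_cat act_inj_stab. Qed.

Lemma aut_normalizer_stab (gam : F -> F) b h :
  is_aut adj gam -> act adj h b = gam b -> in_normalizer (in_stab adj b) (rev h).
Proof.
by move=> gam_aut hb k; rewrite /winv revK -in_stab_act hb in_stab_aut.
Qed.

Lemma in_normalizer_rev b g :
  in_normalizer (in_stab adj b) g -> in_normalizer (in_stab adj b) (rev g).
Proof.
move=> Ng k; rewrite /winv revK (Ng (rev g ++ k ++ g)).
by split; apply: in_stab_coxeq; [apply: cx_sym |]; apply: coxeq_conjK.
Qed.

Section RightMultiplication.
Variable b : F.
Hypothesis adj_conn : connected adj.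

Definition word_to (z : F) : seq 'I_n :=
  proj1_sig (constructive_indefinite_description _ (adj_conn b z)).

Lemma act_word_to z : act adj (word_to z) b = z.
Proof. by rewrite /word_to; case: constructive_indefinite_description. Qed.

Definition right_mult (g : seq 'I_n) (z : F) : F :=
  act adj (word_to z ++ rev g) b.

Lemma right_multE g a : in_normalizer (in_stab adj b) g ->
  right_mult g (act adj a b) = act adj (a ++ rev g) b.
Proof.
move=> Ng; rewrite /right_mult act_inj_stab rev_cat revK -!catA (catA (rev a)).
by apply: (Ng _).1; apply/act_inj_stab; rewrite act_word_to.
Qed.

Lemma right_multK g : in_normalizer (in_stab adj b) g ->
  cancel (right_mult g) (right_mult (rev g)).
Proof.
move=> Ng z; have Nrg := in_normalizer_rev Ng.
rewrite -[z in right_mult g z]act_word_to !right_multE // revK -catA.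
by rewrite (adj_compat _ (coxeq_catl _ (coxeq_revK g))) cats0 act_word_to.
Qed.

Lemma right_mult_aut g :
  in_normalizer (in_stab adj b) g -> is_aut adj (right_mult g).
Proof.
move=> Ng; split.
  exists (right_mult (rev g)); first exact: right_multK.
  by have := right_multK (in_normalizer_rev Ng); rewrite revK.
move=> i z; rewrite -[z in adj i z]act_word_to.
by rewrite -[adj i _]/(act adj (i :: _) b) !right_multE.
Qed.

End RightMultiplication.
End CompatibleAction.

Section CoxeterPremaniplex.
Variable n : nat.

(* The universal n-premaniplex: flags are the elements of C^n, encoded as
   coxeq-classes of words, on which r_i acts by left multiplication. *)
Definition cox_flag : Type :=
  {P : seq 'I_n -> Prop | exists u, forall s, P s <-> coxeq s u}.

Definition cox_class (u : seq 'I_n) : cox_flag :=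
  exist _ (fun s => coxeq s u) (ex_intro _ u (fun s => iff_refl _)).

Lemma cox_flag_ext (P Q : cox_flag) :
  (forall s, sval P s <-> sval Q s) -> P = Q.
Proof.
move=> PQ; apply: eq_sig_hprop => [? ? ?|]; first exact: proof_irrelevance.
by apply: functional_extensionality => s; apply: propositional_extensionality.
Qed.

Lemma cox_classE u v : cox_class u = cox_class v <-> coxeq u v.
Proof.
split=> [E | uv].
  have : sval (cox_class u) u by apply: cx_refl.
  by rewrite E.
apply: cox_flag_ext => s /=.
by split=> su; [apply: cx_trans su uv | apply: cx_trans su (cx_sym uv)].
Qed.

Lemma cox_classP (P : cox_flag) : exists u, P = cox_class u.
Proof. by case: (svalP P) => u Pu; exists u; apply: cox_flag_ext. Qed.

Definition cox_adj (i : 'I_n) (P : cox_flag) : cox_flag.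
Proof.
exists (fun s => sval P (i :: s)).
case: (svalP P) => u Pu; exists (i :: u) => s.
by rewrite Pu; apply: coxeq_consC.
Defined.

Lemma act_cox_class w u : act cox_adj w (cox_class u) = cox_class (w ++ u).
Proof.
elim: w => //= i w ->.
by apply: cox_flag_ext => s /=; apply: coxeq_consC.
Qed.

Lemma cox_premaniplex : is_premaniplex cox_adj.
Proof.
split=> [i P | i j P far_ij]; have [u ->] := cox_classP P.
  rewrite -[cox_adj i _]/(act _ [:: i; i] _) act_cox_class cox_classE.
  exact: (cx_inv [::]).
rewrite -[cox_adj i _]/(act _ [:: i; j; i; j] _) act_cox_class cox_classE.
apply: cx_trans (cx_sym (cx_comm [:: i] [:: j & u] far_ij)) _ => /=.
exact: cx_trans (cx_inv [::] _ i) (cx_inv [::] u j).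
Qed.

Lemma cox_connected : connected cox_adj.
Proof.
move=> P Q; have [u ->] := cox_classP P; have [v ->] := cox_classP Q.
exists (v ++ rev u); rewrite act_cox_class cox_classE -catA.
by have := coxeq_catl v (coxeq_revK u); rewrite cats0.
Qed.

End CoxeterPremaniplex.

Section VoltageOperator.
Variables (n m : nat) (Y : Type) (adjY : 'I_m -> Y -> Y).
Variable eta : Y -> seq 'I_m -> seq 'I_n.
Hypothesis eta_volt : voltage_assignment adjY eta.

Lemma eta_nil y : coxeq (eta y [::]) [::].
Proof.
set a := eta y [::].
have aa : coxeq a (a ++ a) by exact: eta_volt.2 y [::] [::].
apply: cx_sym; apply: cx_trans (cx_sym (coxeq_revK a)) _.
apply: cx_trans (coxeq_catl _ aa) _; rewrite catA.
by have := coxeq_cat [::] a (coxeq_revK a).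
Qed.

Section Mix.
Variables (X : Type) (adjX : 'I_n -> X -> X).
Hypothesis adjX_prem : is_premaniplex adjX.
Local Notation mix := (mix_adj adjX adjY eta).

Lemma act_mix w x y :
  act mix w (x, y) = (act adjX (eta y w) x, act adjY w y).
Proof.
have adjX_compat := premaniplex_cox_compatible adjX_prem.
elim: w => [|i w IH] /=; first by rewrite (adjX_compat _ [::] _ (eta_nil y)).
rewrite IH /mix_adj /= -act_cat; congr pair.
by apply: adjX_compat; apply: cx_sym; apply: eta_volt.2 y w [:: i].
Qed.

Lemma snd_act_mix w p : (act mix w p).2 = act adjY w p.2.
Proof. by case: p => x y; rewrite act_mix. Qed.

Lemma mix_cox_compatible : is_premaniplex adjY -> cox_compatible mix.
Proof.
move=> adjY_prem a b [x y] ab; rewrite !act_mix.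
rewrite (premaniplex_cox_compatible adjY_prem _ ab).
by rewrite (premaniplex_cox_compatible adjX_prem _ (eta_volt.1 y a b ab)).
Qed.

Lemma in_zeta_preimE x0 y0 k :
  in_stab mix (x0, y0) k <-> in_zeta_preim adjX x0 adjY y0 eta k.
Proof.
by rewrite /in_zeta_preim /in_stab act_mix; split=> [[-> ->] | [-> ->]].
Qed.

Lemma mix_snd_aut (gam : X * Y -> X * Y) x0 y0 :
  connected mix -> is_aut mix gam -> (gam (x0, y0)).2 = y0 ->
  forall p, (gam p).2 = p.2.
Proof.
move=> mix_conn gam_aut gam_y0 p; have [a <-] := mix_conn (x0, y0) p.
by rewrite aut_act // !snd_act_mix gam_y0.
Qed.

Lemma fibre_aut_induced (gam : X * Y -> X * Y) y0 :
  (forall v, exists w, in_stab adjY y0 w /\ coxeq (eta y0 w) v) ->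
  connected mix -> is_aut mix gam -> (forall p, (gam p).2 = p.2) ->
  induced_by_aut adjX gam.
Proof.
move=> eta_onto mix_conn gam_aut gam_snd.
pose alpha x := (gam (x, y0)).1.
have gam_fibre x : gam (x, y0) = (alpha x, y0).
  by rewrite [LHS]surjective_pairing gam_snd.
have alpha_act v x : alpha (act adjX v x) = act adjX v (alpha x).
  have [w [wy0 wv]] := eta_onto v.
  rewrite -!(premaniplex_cox_compatible adjX_prem _ wv).
  have := aut_act w (x, y0) gam_aut.
  by rewrite gam_fibre !act_mix // wy0 gam_fibre => -[].
have [gi gK giK] := gam_aut.1.
have gi_snd p : (gi p).2 = p.2 by rewrite -[in RHS](giK p) gam_snd.
have gi_fibre x : gi (x, y0) = ((gi (x, y0)).1, y0).
  by rewrite [LHS]surjective_pairing gi_snd.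
exists alpha; split.
  split; last by move=> i x; apply: (alpha_act [:: i]).
  exists (fun x => (gi (x, y0)).1) => x; first by rewrite -gam_fibre gK.
  by rewrite /alpha -gi_fibre giK.
move=> x y; have [a axy] := mix_conn (x, y0) (x, y).
move: (axy); rewrite act_mix // => /pair_equal_spec[ax ay].
by rewrite -axy aut_act // gam_fibre act_mix // -alpha_act ax ay.
Qed.

End Mix.

Lemma voltage_onto : preserves_connectivity adjY eta ->
  forall y0 v, exists w, in_stab adjY y0 w /\ coxeq (eta y0 w) v.
Proof.
move=> pres_conn y0 v.
have [w] := pres_conn _ _ (@cox_premaniplex n) (@cox_connected n)
  (cox_class [::], y0) (cox_class v, y0).
rewrite act_mix ?act_cox_class ?cats0; last exact: cox_premaniplex.
by move/pair_equal_spec=> [/cox_classE wv wy0]; exists w.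
Qed.

End VoltageOperator.

Theorem proposition5p4 (n m : nat)
    (X : Type) (adjX : 'I_n -> X -> X) (x0 : X)
    (Y : Type) (adjY : 'I_m -> Y -> Y) (y0 : Y)
    (eta : Y -> seq 'I_m -> seq 'I_n) :
  is_premaniplex adjX -> connected adjX ->
  is_premaniplex adjY -> connected adjY ->
  voltage_assignment adjY eta ->
  trivial_spanning_tree adjY eta ->
  ((connected (mix_adj adjX adjY eta) /\ all_auts_induced adjX adjY eta) ->
     forall g : seq 'I_m,
       in_normalizer (in_zeta_preim adjX x0 adjY y0 eta) g -> in_stab adjY y0 g)
  /\
  ((preserves_connectivity adjY eta /\
    (forall g : seq 'I_m,
       in_normalizer (in_zeta_preim adjX x0 adjY y0 eta) g -> in_stab adjY y0 g)) ->
     all_auts_induced adjX adjY eta).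
Proof.
move=> adjX_prem adjX_conn adjY_prem _ eta_volt _.
have mix_compat := mix_cox_compatible eta_volt adjX_prem adjY_prem.
have adjY_compat := premaniplex_cox_compatible adjY_prem.
have zeta_preimE k := in_zeta_preimE eta_volt adjX_prem x0 y0 k.
split=> [[mix_conn all_induced] g Ng | [pres_conn N_sub_L] gam gam_aut].
  have {}Ng := eq_in_normalizer (fun k => iff_sym (zeta_preimE k)) Ng.
  have [alpha [_ gamE]] := all_induced _ (right_mult_aut mix_compat mix_conn Ng).
  have := right_multE mix_compat mix_conn [::] Ng.
  rewrite /= gamE act_mix // => /pair_equal_spec[_ /esym y0_fixed].
  exact: (in_stab_rev adjY_compat y0_fixed).
have mix_conn := pres_conn _ _ adjX_prem adjX_conn.
have [g0 g0E] := mix_conn (x0, y0) (gam (x0, y0)).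
have /N_sub_L/(in_stab_rev adjY_compat) g0_y0 :=
  eq_in_normalizer zeta_preimE (aut_normalizer_stab mix_compat gam_aut g0E).
have gam_y0 : (gam (x0, y0)).2 = y0 by rewrite -g0E snd_act_mix //= g0_y0.
apply: (fibre_aut_induced eta_volt adjX_prem (voltage_onto eta_volt pres_conn y0)
  mix_conn gam_aut).
exact: (mix_snd_aut eta_volt adjX_prem mix_conn gam_aut gam_y0).
Qed.
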